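(* Suppose that for every $m'\in\mathbb{N}$ there are sequences $(Z_{j,m'})_{j}$ of $\mathcal{C}^\infty$ maps $\mathbb{T}^d\to Gl(n,\mathbb{C})$ and $(F_{j,m'})_j$ of $\mathcal{C}^\infty$ maps $\mathbb{T}^d\to gl(n,\mathbb{C})$ such that $\|Z_{j,m'}^{\pm1}\|^{m'}_{\mathcal{C}^{m'}}\|F_{j,m'}\|_{\mathcal{C}^{m'}}\to0$ as $j\to\infty$. Then there exist sequences $(\tilde Z_j)$ and $(\tilde F_j)$, extracted from these with the same indices (i.e. $\tilde Z_j=Z_{a_j,b_j}$ and $\tilde F_j=F_{a_j,b_j}$ for some indices $(a_j,b_j)$), such that for all $m,r\in\mathbb{N}$, $\|\tilde Z_j^{\pm1}\|^m_{\mathcal{C}^r}\|\tilde F_j\|_{\mathcal{C}^r}\to0$ as $j\to\infty$.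
   Context: $\mathbb{T}^d=\mathbb{R}^d/\mathbb{Z}^d$; $\|\cdot\|$ operator norm, $\|A\|_{\mathcal{C}^0}=\sup_\theta\|A(\theta)\|$, $\|A\|_{\mathcal{C}^r}=\max_{|\alpha|\le r}\|\partial^\alpha A\|_{\mathcal{C}^0}$; conditions with $\pm1$ are required for both the maps and their pointwise inverses. *)

From HB Require Import structures.
From mathcomp Require Import all_boot all_order all_algebra.
From mathcomp Require Import all_classical all_reals all_analysis.
From mathcomp Require Import complex.
Set Implicit Arguments. Unset Strict Implicit. Unset Printing Implicit Defensive.
Import Order.TTheory GRing.Theory Num.Theory.
Import numFieldNormedType.Exports.
Local Open Scope classical_set_scope.
Local Open Scope ring_scope.

Section TorusMaps.
Variables (R : realType) (d n : nat).

(* A map T^d -> M_n(C) is represented as a Z^d-periodic map R^d -> M_n(C);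
   points of R^d are row vectors 'rV[R]_d. *)
Definition mxfun := 'rV[R]_d -> 'M[R[i]]_n.

Definition evec (k : 'I_d) : 'rV[R]_d := delta_mx 0 k.

Definition periodic (A : mxfun) := forall (k : 'I_d) x, A (x + evec k) = A x.

Definition dpart1 (k : 'I_d) (A : mxfun) : mxfun := fun x =>
  \matrix_(i, j)
    Complex ('D_(evec k) (fun y => complex.Re (A y i j)) x)
            ('D_(evec k) (fun y => complex.Im (A y i j)) x).

(* iterated partial derivative along the list of directions s
   (the head of s is applied last) *)
Fixpoint dpart (s : seq 'I_d) (A : mxfun) : mxfun :=
  match s with
  | [::] => A
  | k :: s' => dpart1 k (dpart s' A)
  end.

Definition smooth (A : mxfun) :=
  forall (s : seq 'I_d) (i j : 'I_n),
    continuous (fun y => complex.Re (dpart s A y i j)) /\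
    continuous (fun y => complex.Im (dpart s A y i j)) /\
    forall (k : 'I_d) x,
      derivable (fun y => complex.Re (dpart s A y i j)) x (evec k) /\
      derivable (fun y => complex.Im (dpart s A y i j)) x (evec k).

Definition torus_smooth (A : mxfun) := periodic A /\ smooth A.

Definition torus_smooth_GL (A : mxfun) :=
  torus_smooth A /\ forall x, A x \in unitmx.

Definition mxinvf (A : mxfun) : mxfun := fun x => invmx (A x).

End TorusMaps.

Section Norms.
Variables (R : realType).

Definition cmod (z : R[i]) : R := Num.sqrt (complex.Re z ^+ 2 + complex.Im z ^+ 2).

Definition vnorm n (v : 'cV[R[i]]_n) : R := Num.sqrt (\sum_i cmod (v i 0) ^+ 2).

Definition opnorm n (M : 'M[R[i]]_n) : R :=
  sup [set vnorm (M *m v) | v in [set v : 'cV[R[i]]_n | vnorm v <= 1]].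

Definition C0norm d n (A : mxfun R d n) : R := sup [set opnorm (A x) | x in setT].

(* ||A||_{C^r} = max_{|alpha| <= r} ||d^alpha A||_{C^0}; multi-indices of order
   <= r are represented by lists of directions of length <= r *)
Definition Crnorm d n (r : nat) (A : mxfun R d n) : R :=
  sup [set C0norm (dpart s A) | s in [set s : seq 'I_d | (size s <= r)%N]].

End Norms.

From Pilot Require Import Defs.
From HB Require Import structures.
From mathcomp Require Import all_boot all_order all_algebra.
From mathcomp Require Import all_classical all_reals all_analysis.
From mathcomp Require Import complex.
From mathcomp Require Import lra.
Import Order.TTheory GRing.Theory Num.Theory.
Import numFieldNormedType.Exports.
Local Open Scope classical_set_scope.
Local Open Scope ring_scope.

(* One of Z(theta), Z(theta)^-1 has operator norm at least 1, so for n > 0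
   ||Z||_C0 ||Z^-1||_C0 >= 1 and hence, the C^r norms being bigger than the C^0
   norm, ||F||_{C^J} <= (||Z||_{C^J}^J + ||Z^-1||_{C^J}^J) ||F||_{C^J} =: w_J.
   Since C^r norms increase with r, for m, r <= J this gives
   ||Z^{+-1}||_{C^r}^m ||F||_{C^r} <= ||F||_{C^J} (1 + ||Z^{+-1}||_{C^J}^J) <= 2 w_J.
   Choosing by a diagonal argument a_J with w_J(Z_{a_J,J}, F_{a_J,J}) <= 1/(J+1)
   and b_J = J proves the claim.  The only analytic input is that the C^0 norm,
   a supremum, really bounds the values of the continuous periodic maps Z and
   Z^-1 (the sup of an unbounded set is 0 by convention). *)

Lemma sup_ge0 {R : realType} (E : set R) : (forall r, E r -> 0 <= r) -> 0 <= sup E.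
Proof.
move=> E_ge0; have [[[e Ee] ubE]|/sup_out ->//] := pselect (has_sup E).
exact: le_trans (E_ge0 e Ee) (ub_le_sup ubE Ee).
Qed.

Section ComplexModulus.
Context {R : realType}.
Implicit Types x y z : R[i].

Lemma cmodE z : (cmod z)%:C%C = `|z|.
Proof. by case: z. Qed.

Lemma cmod_ge0 z : 0 <= cmod z.
Proof. exact: sqrtr_ge0. Qed.

Lemma cmod0 : cmod (0 : R[i]) = 0.
Proof. by apply: (@complexI R); rewrite cmodE normr0. Qed.

Lemma cmod_eq0 z : cmod z = 0 -> z = 0.
Proof. by move=> z0; apply/eqP; rewrite -normr_eq0 -cmodE z0. Qed.

Lemma cmodM x y : cmod (x * y) = cmod x * cmod y.
Proof. by apply: (@complexI R); rewrite rmorphM /= !cmodE normrM. Qed.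

Lemma cmodD x y : cmod (x + y) <= cmod x + cmod y.
Proof. by rewrite -(@lecR R) rmorphD /= !cmodE ler_normD. Qed.

Lemma cmod_sum (I : finType) (f : I -> R[i]) : cmod (\sum_i f i) <= \sum_i cmod (f i).
Proof.
elim/big_rec2: _ => [|i y x _ ih]; first by rewrite cmod0.
by rewrite (le_trans (cmodD _ _)) // lerD2l.
Qed.

Lemma cmod_real (c : R) : 0 <= c -> cmod c%:C%C = c.
Proof. by move=> c0; apply: (@complexI R); rewrite cmodE ger0_norm // ler0c. Qed.

Lemma cmod_le_ReIm z : cmod z <= `|complex.Re z| + `|complex.Im z|.
Proof.
case: z => a b; rewrite /cmod /=.
rewrite -[X in _ <= X]ger0_norm ?addr_ge0 // -sqrtr_sqr; apply: ler_wsqrtr.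
rewrite sqrrD !real_normK ?num_real // -addrA lerD2l lerDr.
by rewrite mulrn_wge0 // mulr_ge0.
Qed.

End ComplexModulus.

Section OperatorNorm.
Context {R : realType} {n : nat}.
Implicit Types (M : 'M[R[i]]_n) (u v : 'cV[R[i]]_n).

Lemma vnorm_ge0 v : 0 <= vnorm v.
Proof. exact: sqrtr_ge0. Qed.

Lemma cmod_le_vnorm v i : cmod (v i 0) <= vnorm v.
Proof.
rewrite /vnorm -[X in X <= _]ger0_norm ?cmod_ge0 // -sqrtr_sqr.
apply: ler_wsqrtr; rewrite (bigD1 i) //= lerDl.
by apply: sumr_ge0 => j _; rewrite sqr_ge0.
Qed.

Lemma vnorm0 : vnorm (0 : 'cV[R[i]]_n) = 0.
Proof. by rewrite /vnorm big1 ?sqrtr0 // => i _; rewrite mxE cmod0 expr0n. Qed.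

Lemma vnorm_eq0 v : vnorm v = 0 -> v = 0.
Proof.
move=> v0; apply/matrixP => i j; rewrite (ord1 j) mxE.
apply: cmod_eq0; apply/eqP; rewrite eq_le cmod_ge0 andbT -v0.
exact: cmod_le_vnorm.
Qed.

Lemma vnormZ (c : R) v : 0 <= c -> vnorm (c%:C%C *: v) = c * vnorm v.
Proof.
move=> c0; rewrite /vnorm.
under eq_bigr => i _ do rewrite mxE cmodM cmod_real // exprMn.
by rewrite -mulr_sumr sqrtrM ?sqr_ge0 // sqrtr_sqr ger0_norm.
Qed.

Lemma vnorm_mulmx_le M (K : R) v : 0 <= K -> (forall i j, cmod (M i j) <= K) ->
  vnorm v <= 1 -> vnorm (M *m v) <= Num.sqrt (n%:R * (n%:R * K) ^+ 2).
Proof.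
move=> K0 MK v1; rewrite /vnorm; apply: ler_wsqrtr.
have sumK c : n%:R * c = \sum_(j < n) c by rewrite sumr_const card_ord mulr_natl.
rewrite sumK; apply: ler_sum => i _; apply: lerXn2r; rewrite ?nnegrE ?cmod_ge0 ?mulr_ge0 //.
rewrite mxE (le_trans (cmod_sum _ _)) // sumK; apply: ler_sum => j _.
rewrite cmodM -[X in _ <= X]mulr1; apply: ler_pM; rewrite ?cmod_ge0 ?MK //.
exact: le_trans (cmod_le_vnorm _ _) v1.
Qed.

Lemma opnorm_has_ub M :
  has_ubound [set vnorm (M *m v) | v in [set v : 'cV[R[i]]_n | vnorm v <= 1]].
Proof.
pose K := \sum_i \sum_j cmod (M i j).
have K0 : 0 <= K by do 2!(apply: sumr_ge0 => ? _); exact: cmod_ge0.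
exists (Num.sqrt (n%:R * (n%:R * K) ^+ 2)) => _ [v v1 <-].
apply: vnorm_mulmx_le => // i j.
rewrite /K (bigD1 i) //= (bigD1 j) //= -addrA lerDl addr_ge0 //.
  by apply: sumr_ge0 => ? _; exact: cmod_ge0.
by do 2!(apply: sumr_ge0 => ? _); exact: cmod_ge0.
Qed.

Lemma vnorm_mulmx_le_opnorm M v : vnorm v <= 1 -> vnorm (M *m v) <= opnorm M.
Proof. by move=> v1; apply: ub_le_sup; [exact: opnorm_has_ub | exists v]. Qed.

Lemma opnorm_ge0 M : 0 <= opnorm M.
Proof. by apply: sup_ge0 => _ [v _ <-]; exact: vnorm_ge0. Qed.

Lemma opnorm_le M (K : R) : 0 <= K -> (forall i j, cmod (M i j) <= K) ->
  opnorm M <= Num.sqrt (n%:R * (n%:R * K) ^+ 2).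
Proof.
move=> K0 MK; apply: ge_sup; first by exists (vnorm (M *m 0)), 0; rewrite //= vnorm0.
by move=> _ [v v1 <-]; exact: vnorm_mulmx_le.
Qed.

Lemma vnorm_mulmx M u : vnorm (M *m u) <= opnorm M * vnorm u.
Proof.
have [u0|/eqP u_neq0] := pselect (vnorm u = 0).
  by rewrite u0 mulr0 (vnorm_eq0 _ u0) mulmx0 vnorm0.
set t := vnorm u in u_neq0 *.
have t_gt0 : 0 < t by rewrite lt_def u_neq0 vnorm_ge0.
have tV_ge0 : 0 <= t^-1 by rewrite invr_ge0 ltW.
have -> : u = t%:C%C *: (t^-1%:C%C *: u).
  by rewrite scalerA -rmorphM /= mulfV // scale1r.
rewrite -scalemxAr (vnormZ _ _ (ltW t_gt0)) mulrC ler_pM2r //.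
by apply: vnorm_mulmx_le_opnorm; rewrite (vnormZ _ _ tV_ge0) mulVf.
Qed.

End OperatorNorm.

Lemma opnorm_invmx_ge1 {R : realType} {n} (M : 'M[R[i]]_n.+1) : M \in unitmx ->
  1 <= opnorm M * opnorm (invmx M).
Proof.
move=> Mu; pose e : 'cV[R[i]]_n.+1 := delta_mx 0 0.
have e1 : vnorm e = 1.
  rewrite /vnorm (bigD1 0) //= big1 ?addr0.
    by rewrite mxE eqxx /= cmod_real ?ler01 // expr1n sqrtr1.
  by move=> i /negbTE i0; rewrite mxE i0 /= cmod0 expr0n.
have := vnorm_mulmx M (invmx M *m e); rewrite mulKVmx // e1 => /le_trans; apply.
by rewrite ler_wpM2l ?opnorm_ge0 // vnorm_mulmx_le_opnorm // e1.
Qed.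

Section PeriodicBounded.
Context {R : realType} {d : nat}.
Variable g : 'rV[R]_d -> R.
Hypothesis g_periodic : forall k x, g (x + evec R k) = g x.

Lemma periodic_shiftz k (z : int) x : g (x + evec R k *~ z) = g x.
Proof.
have shiftn m y : g (y + evec R k *+ m) = g y.
  by elim: m y => [|m ih] y; rewrite ?mulr0n ?addr0 // mulrSr addrA g_periodic ih.
case: z => m; first by rewrite -pmulrn shiftn.
by rewrite NegzE mulrNz -pmulrn -[in RHS](subrK (evec R k *+ m.+1) x) shiftn.
Qed.

Lemma periodic_shift_sumz (c : 'I_d -> int) (s : seq 'I_d) x :
  g (x + \sum_(k <- s) evec R k *~ c k) = g x.
Proof.
elim: s x => [|k s ih] x; first by rewrite big_nil addr0.
by rewrite big_cons addrA addrAC periodic_shiftz ih.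
Qed.

(* Every point is an integer translate of a point of the unit cube [0,1]^d,
   which is compact. *)
Lemma continuous_periodic_bounded : continuous g -> exists M, forall x, `|g x| <= M.
Proof.
move=> g_cont.
pose K := [set v : 'rV[R]_d | forall i, [set` `[(0:R), 1]] (v ord0 i)].
have K_compact : compact K.
  exact: (@rV_compact R d (fun=> [set` `[(0:R), 1]]) (fun=> @segment_compact R 0 1)).
have [M [_ gK_le]] : bounded_set (g @` K).
  by apply/compact_bounded/continuous_compact => //; exact: continuous_subspaceT.
exists (M + 1) => x.
pose c k := Num.floor (x ord0 k).
pose y := x - \sum_(k < d) evec R k *~ c k.
have -> : g x = g y by rewrite /y -(periodic_shift_sumz c (index_enum _) (x - _)) subrK.
have Ky : K y.
  move=> i; rewrite /y !mxE summxE (bigD1 i) //= big1 ?addr0; last first.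
    by move=> j /negbTE ji; rewrite -scaler_int !mxE [i == j]eq_sym ji andbF mulr0.
  rewrite -scaler_int !mxE !eqxx /= mulr1 in_itv /= subr_ge0.
  rewrite real_floor_le ?num_real //=.
  have := real_floorD1_gt (num_real (x ord0 i)); rewrite intrD -/(c i); lra.
by apply: (gK_le (M + 1)); [rewrite ltrDl | exists y].
Qed.

End PeriodicBounded.

Section ComplexContinuity.
Context {R : realType} {T : topologicalType}.
Implicit Types f g : T -> R[i].

Definition ccontinuous f :=
  continuous (fun x => complex.Re (f x)) /\ continuous (fun x => complex.Im (f x)).

Lemma ccontinuous_cst c : ccontinuous (fun=> c).
Proof. by split=> x; apply: cst_continuous. Qed.

Lemma ccontinuousD f g : ccontinuous f -> ccontinuous g -> ccontinuous (f \+ g).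
Proof.
move=> [fRe fIm] [gRe gIm].
have ReD x : complex.Re ((f \+ g) x) = complex.Re (f x) + complex.Re (g x).
  by rewrite /=; case: (f x) (g x) => ? ? [].
have ImD x : complex.Im ((f \+ g) x) = complex.Im (f x) + complex.Im (g x).
  by rewrite /=; case: (f x) (g x) => ? ? [].
split=> x; [rewrite (funext ReD) | rewrite (funext ImD)].
  exact: (continuousD (fRe x) (gRe x)).
exact: (continuousD (fIm x) (gIm x)).
Qed.

Lemma ccontinuousM f g : ccontinuous f -> ccontinuous g -> ccontinuous (f \* g).
Proof.
move=> [fRe fIm] [gRe gIm].
have ReM x : complex.Re ((f \* g) x) =
    complex.Re (f x) * complex.Re (g x) - complex.Im (f x) * complex.Im (g x).
  by rewrite /=; case: (f x) (g x) => ? ? [].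
have ImM x : complex.Im ((f \* g) x) =
    complex.Re (f x) * complex.Im (g x) + complex.Im (f x) * complex.Re (g x).
  by rewrite /=; case: (f x) (g x) => ? ? [].
split=> x; [rewrite (funext ReM) | rewrite (funext ImM)].
  exact: (continuousB (continuousM (fRe x) (gRe x)) (continuousM (fIm x) (gIm x))).
exact: (continuousD (continuousM (fRe x) (gIm x)) (continuousM (fIm x) (gRe x))).
Qed.

Lemma ccontinuousV f : (forall x, f x != 0) -> ccontinuous f ->
  ccontinuous (fun x => (f x)^-1).
Proof.
move=> f_neq0 [fRe fIm].
pose nf x := complex.Re (f x) ^+ 2 + complex.Im (f x) ^+ 2.
have nf_neq0 x : nf x != 0.
  apply: contra (f_neq0 x); rewrite /nf; case: (f x) => a b /=.
  by rewrite paddr_eq0 ?sqr_ge0 // !sqrf_eq0 => /andP[/eqP-> /eqP->].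
have nfV_cont : continuous (fun x => (nf x)^-1).
  move=> x; apply: continuousV => //.
  exact: (continuousD (continuousM (fRe x) (fRe x)) (continuousM (fIm x) (fIm x))).
have ReV x : complex.Re ((f x)^-1) = complex.Re (f x) * (nf x)^-1.
  by rewrite /nf; case: (f x).
have ImV x : complex.Im ((f x)^-1) = - (complex.Im (f x) * (nf x)^-1).
  by rewrite /nf; case: (f x).
split=> x; [rewrite (funext ReV) | rewrite (funext ImV)].
  exact: (continuousM (fRe x) (nfV_cont x)).
exact: (continuousN (continuousM (fIm x) (nfV_cont x))).
Qed.

Lemma ccontinuous_sum (I : Type) (s : seq I) (F : I -> T -> R[i]) :
  (forall i, ccontinuous (F i)) -> ccontinuous (fun x => \sum_(i <- s) F i x).
Proof.
move=> F_cont; elim: s => [|i s ih].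
  by under [fun x => _]funext => x do rewrite big_nil; exact: ccontinuous_cst.
by under [fun x => _]funext => x do rewrite big_cons; exact: ccontinuousD.
Qed.

Lemma ccontinuous_prod (I : Type) (s : seq I) (F : I -> T -> R[i]) :
  (forall i, ccontinuous (F i)) -> ccontinuous (fun x => \prod_(i <- s) F i x).
Proof.
move=> F_cont; elim: s => [|i s ih].
  by under [fun x => _]funext => x do rewrite big_nil; exact: ccontinuous_cst.
by under [fun x => _]funext => x do rewrite big_cons; exact: ccontinuousM.
Qed.

Lemma ccontinuous_det m (M : T -> 'M[R[i]]_m) :
  (forall i j, ccontinuous (fun x => M x i j)) -> ccontinuous (fun x => \det (M x)).
Proof.
move=> M_cont; apply: ccontinuous_sum => s.
by apply: ccontinuousM; [exact: ccontinuous_cst | apply: ccontinuous_prod].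
Qed.

Lemma ccontinuous_invmx m (M : T -> 'M[R[i]]_m) : (forall x, M x \in unitmx) ->
  (forall i j, ccontinuous (fun x => M x i j)) ->
  forall i j, ccontinuous (fun x => invmx (M x) i j).
Proof.
move=> M_unit M_cont i j.
have invmxE x : invmx (M x) i j =
    (\det (M x))^-1 * ((-1) ^+ (j + i) * \det (row' j (col' i (M x)))).
  by rewrite /invmx M_unit !mxE.
rewrite (funext invmxE); apply: ccontinuousM; last apply: ccontinuousM.
- apply: ccontinuousV; last exact: ccontinuous_det.
  by move=> x; have := M_unit x; rewrite unitmxE unitfE.
- exact: ccontinuous_cst.
apply: ccontinuous_det => a b.
by under [fun x => _]funext => x do rewrite !mxE; exact: M_cont.
Qed.

End ComplexContinuity.

Section SupNorms.
Context {R : realType} {d : nat}.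

Lemma ccontinuous_entries_bounded {n} (A : mxfun R d n) : Defs.periodic A ->
  (forall i j, ccontinuous (fun x => A x i j)) ->
  exists K, 0 <= K /\ forall x i j, cmod (A x i j) <= K.
Proof.
move=> A_per A_cont.
have entry_bounded (p : 'I_n * 'I_n) : exists M, forall x, cmod (A x p.1 p.2) <= M.
  case: p => i j; have [ReA ImA] := A_cont i j.
  have [M1 M1_ub] := continuous_periodic_bounded _ (fun k x =>
    congr1 (fun B : 'M[R[i]]_n => complex.Re (B i j)) (A_per k x)) ReA.
  have [M2 M2_ub] := continuous_periodic_bounded _ (fun k x =>
    congr1 (fun B : 'M[R[i]]_n => complex.Im (B i j)) (A_per k x)) ImA.
  by exists (M1 + M2) => x; apply: le_trans (cmod_le_ReIm _) (lerD _ _).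
have [M M_ub] := choice entry_bounded.
exists (\sum_p `|M p|); split=> [|x i j]; first exact: sumr_ge0.
apply: le_trans (M_ub (i, j) x) _; rewrite (bigD1 (i, j)) //=.
by rewrite (le_trans (ler_norm _)) // lerDl sumr_ge0.
Qed.

Lemma C0norm_ge0 {n} (A : mxfun R d n) : 0 <= C0norm A.
Proof. by apply: sup_ge0 => _ [x _ <-]; exact: opnorm_ge0. Qed.

Lemma opnorm_le_C0norm {n} (A : mxfun R d n) : Defs.periodic A ->
  (forall i j, ccontinuous (fun x => A x i j)) -> forall x, opnorm (A x) <= C0norm A.
Proof.
move=> A_per A_cont x; have [K [K0 AK]] := ccontinuous_entries_bounded _ A_per A_cont.
apply: ub_le_sup; last by exists x.
by exists (Num.sqrt (n%:R * (n%:R * K) ^+ 2)) => _ [y _ <-]; exact: opnorm_le.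
Qed.

Lemma C0norm_mul_invf_ge1 {n} (Z : mxfun R d n.+1) : torus_smooth_GL Z ->
  1 <= C0norm Z * C0norm (mxinvf Z).
Proof.
move=> [[Z_per Z_smooth] Z_unit].
have Z_cont i j : ccontinuous (fun x => Z x i j) by have [? [? _]] := Z_smooth [::] i j.
have Zinv_per : Defs.periodic (mxinvf Z) by move=> k x; rewrite /mxinvf Z_per.
apply: le_trans (opnorm_invmx_ge1 _ (Z_unit 0)) _.
apply: ler_pM; rewrite ?opnorm_ge0 ?opnorm_le_C0norm //.
exact: ccontinuous_invmx.
Qed.

Lemma Crnorm_has_ub {n} (A : mxfun R d n) r :
  has_ubound [set C0norm (dpart s A) | s in [set s : seq 'I_d | (size s <= r)%N]].
Proof.
exists (\sum_(t : r.-tuple (option 'I_d)) C0norm (dpart (pmap id t) A)).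
move=> _ [s s_le <-].
have pad_size : size (map Some s ++ nseq (r - size s) None) == r.
  by rewrite size_cat size_map size_nseq subnKC.
have -> : s = pmap id (Tuple pad_size).
  have pmap_None k : pmap id (nseq k (@None 'I_d)) = [::] by elim: k.
  by rewrite /= pmap_cat (@map_pK _ _ id Some (fun=> erefl)) pmap_None cats0.
by rewrite (bigD1 (Tuple pad_size)) //= lerDl sumr_ge0 // => t _; exact: C0norm_ge0.
Qed.

Lemma Crnorm_ge0 {n} (A : mxfun R d n) r : 0 <= Crnorm r A.
Proof. by apply: sup_ge0 => _ [s _ <-]; exact: C0norm_ge0. Qed.

Lemma C0norm_le_Crnorm {n} (A : mxfun R d n) r : C0norm A <= Crnorm r A.
Proof. by apply: ub_le_sup; [exact: Crnorm_has_ub | exists [::]]. Qed.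

Lemma le_Crnorm {n} (A : mxfun R d n) r m : (r <= m)%N -> Crnorm r A <= Crnorm m A.
Proof.
move=> r_le_m; apply: ge_sup; first by exists (C0norm (dpart [::] A)), [::].
move=> _ [s s_le <-]; apply: ub_le_sup; first exact: Crnorm_has_ub.
by exists s => //; apply: leq_trans r_le_m.
Qed.

Lemma Crnorm_exprM_ge0 {n} (A F : mxfun R d n) m r : 0 <= Crnorm r A ^+ m * Crnorm r F.
Proof. by rewrite mulr_ge0 ?exprn_ge0 ?Crnorm_ge0. Qed.

Lemma Crnorm_mx0 (A : mxfun R d 0) r : Crnorm r A = 0.
Proof.
have opnorm_mx0 (M : 'M[R[i]]_0) : opnorm M = 0.
  apply/eqP; rewrite eq_le opnorm_ge0 andbT.
  apply: ge_sup; first by exists (vnorm (M *m 0)), 0; rewrite //= vnorm0.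
  by move=> _ [v _ <-]; rewrite /vnorm big_ord0 sqrtr0.
apply/eqP; rewrite eq_le Crnorm_ge0 andbT.
apply: ge_sup; first by exists (C0norm (dpart [::] A)), [::].
move=> _ [s _ <-]; apply: ge_sup; first by exists (opnorm (dpart s A 0)), 0.
by move=> _ [x _ <-]; rewrite opnorm_mx0.
Qed.

End SupNorms.

Lemma diagonal_cvg0 {R : realType} (u : nat -> nat -> R) :
  (forall m, u ^~ m @ \oo --> 0) -> exists a, (fun J => u (a J) J) @ \oo --> 0.
Proof.
move=> u_cvg.
have small J : exists j, `|u j J| <= J.+1%:R^-1.
  have J_gt0 : 0 < J.+1%:R^-1 :> R by rewrite invr_gt0.
  have [N _ N_small] := cvgr0_norm_le _ (u_cvg J) _ J_gt0.
  by exists N; apply: N_small => /=.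
have [a a_small] := choice small.
exists a; apply: norm_cvg0; apply: (squeeze_cvgr _ (cvg_cst 0) cvg_harmonic).
by near=> J; rewrite normr_ge0 a_small.
Unshelve. all: by end_near.
Qed.

Lemma ler_exprM_add {R : realFieldType} (z w f : R) m : 0 <= z -> 0 <= w -> 0 <= f ->
  1 <= z * w -> f <= z ^+ m * f + w ^+ m * f.
Proof.
move=> z0 w0 f0 zw1; rewrite -mulrDl ler_peMl //.
have [z_ge1|/ltW z_le1] := leP 1 z; first by rewrite ler_wpDr ?exprn_ge0 ?exprn_ege1.
have w_ge1 : 1 <= w by apply: le_trans zw1 _; rewrite ler_piMl.
by rewrite ler_wpDl ?exprn_ge0 ?exprn_ege1.
Qed.

Lemma ler_exprn_1D {R : realFieldType} (a b : R) k m : 0 <= a <= b -> (k <= m)%N ->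
  a ^+ k <= 1 + b ^+ m.
Proof.
move=> /andP[a0 ab] km; have b0 := le_trans a0 ab.
apply: le_trans (_ : b ^+ k <= _); first by rewrite lerXn2r ?nnegrE.
have [b_le1|/ltW b_ge1] := leP b 1.
  by rewrite ler_wpDr ?exprn_ge0 ?exprn_ile1.
by rewrite ler_wpDl ?ler_weXn2l.
Qed.

Section WeightedNorm.
Context {R : realType} {d n : nat}.
Implicit Types (A Z F : mxfun R d n).

Definition weighted_Crnorm m Z F :=
  Crnorm m Z ^+ m * Crnorm m F + Crnorm m (mxinvf Z) ^+ m * Crnorm m F.

Lemma Crnorm_le_weighted Z F m : torus_smooth_GL Z -> Crnorm m F <= weighted_Crnorm m Z F.
Proof.
rewrite /weighted_Crnorm; case: n Z F => [|n'] Z F Z_GL.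
  rewrite [X in X <= _]Crnorm_mx0.
  exact: addr_ge0 (Crnorm_exprM_ge0 Z F m m) (Crnorm_exprM_ge0 (mxinvf Z) F m m).
apply: ler_exprM_add; [exact: Crnorm_ge0 | exact: Crnorm_ge0 | exact: Crnorm_ge0 |].
apply: le_trans (C0norm_mul_invf_ge1 _ Z_GL) _.
by apply: ler_pM; [exact: C0norm_ge0 | exact: C0norm_ge0 | exact: C0norm_le_Crnorm..].
Qed.

Lemma Crnorm_exprM_le A F m r J : (r <= J)%N -> (m <= J)%N ->
  Crnorm r A ^+ m * Crnorm r F <= Crnorm J F + Crnorm J A ^+ J * Crnorm J F.
Proof.
move=> rJ mJ; rewrite -[X in X + _]mul1r -mulrDl.
apply: ler_pM; rewrite ?exprn_ge0 ?Crnorm_ge0 ?le_Crnorm //.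
by apply: ler_exprn_1D; rewrite ?Crnorm_ge0 ?le_Crnorm.
Qed.

Lemma Crnorm_exprM_le_weighted Z F m r J : torus_smooth_GL Z ->
  (r <= J)%N -> (m <= J)%N ->
  Crnorm r Z ^+ m * Crnorm r F <= 2 * weighted_Crnorm J Z F /\
  Crnorm r (mxinvf Z) ^+ m * Crnorm r F <= 2 * weighted_Crnorm J Z F.
Proof.
(* The closing steps are explicit: letting [done] compare the Z-term with the
   Z^-1-term makes unification unfold [invmx]. *)
move=> Z_GL rJ mJ; have F_le := Crnorm_le_weighted Z F J Z_GL.
rewrite /weighted_Crnorm in F_le *; rewrite mulr_natl mulr2n.
split; apply: le_trans (Crnorm_exprM_le _ _ _ _ _ rJ mJ) _; apply: lerD F_le _.
  by rewrite lerDl; exact: Crnorm_exprM_ge0.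
by rewrite addrC lerDl; exact: Crnorm_exprM_ge0.
Qed.

End WeightedNorm.

Theorem lemma24 (R : realType) (d n : nat)
  (Z : nat -> nat -> mxfun R d n) (F : nat -> nat -> mxfun R d n) :
  (forall j m', torus_smooth_GL (Z j m')) ->
  (forall j m', torus_smooth (F j m')) ->
  (forall m' : nat,
     (fun j => Crnorm m' (Z j m') ^+ m' * Crnorm m' (F j m')) @ \oo --> 0 /\
     (fun j => Crnorm m' (mxinvf (Z j m')) ^+ m' * Crnorm m' (F j m')) @ \oo --> 0) ->
  exists a b : nat -> nat,
    forall m r : nat,
      (fun j => Crnorm r (Z (a j) (b j)) ^+ m * Crnorm r (F (a j) (b j))) @ \oo --> 0 /\
      (fun j => Crnorm r (mxinvf (Z (a j) (b j))) ^+ m * Crnorm r (F (a j) (b j))) @ \oo --> 0.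
Proof.
move=> Z_GL _ ZF_cvg.
have w_cvg m' : (fun j => weighted_Crnorm m' (Z j m') (F j m')) @ \oo --> 0.
  by have [ZF ZinvF] := ZF_cvg m'; rewrite -[0]addr0; exact: (cvgD ZF ZinvF).
have [a a_cvg] := diagonal_cvg0 _ w_cvg.
exists a, id => m r.
have w2_cvg : (fun J => 2 * weighted_Crnorm J (Z (a J) J) (F (a J) J)) @ \oo --> 0.
  by rewrite -(mulr0 2); apply: cvgM; [exact: cvg_cst | exact: a_cvg].
split; apply: (squeeze_cvgr _ (cvg_cst 0) w2_cvg); exists (maxn m r) => // J /=;
  rewrite geq_max => /andP[mJ rJ];
  have [ZF_le ZinvF_le] :=
    Crnorm_exprM_le_weighted (Z (a J) J) (F (a J) J) m r J (Z_GL _ _) rJ mJ;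
  rewrite Crnorm_exprM_ge0 /=.
  exact: ZF_le.
exact: ZinvF_le.
Qed.
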